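(* Let $\mathcal V$ be braided monoidal closed and let $H$ be a Hopf $\mathcal V$-category with object set $X$ whose antipode $s$ is invertible (each $s_{xy}$ is an isomorphism). If $t=\{t^{xy}\colon I\to H_{x,y}\}$ is a left integral family for $H$, then the family $s\circ t:=\{s_{yx}\circ t^{yx}\colon I\to H_{x,y}\}_{x,y\in X}$ is a right integral family for $H$. Moreover, if $t$ is left non-singular then $s\circ t$ is right non-singular, and if $t$ is right non-singular then $s\circ t$ is left non-singular.
   Context: $\mathcal V$ is a braided monoidal category with tensor $\otimes$, unit $I$, braiding $\sigma$ (unit constraints suppressed), which is moreover closed; write $A^*_{x,y}:=[A_{x,y},I]$ with evaluation $\mathrm{ev}_{xy}\colon A^*_{x,y}\otimes A_{x,y}\to I$. A $\mathcal V$-category $A$ with object set $X$ has objects $A_{x,y}$, compositions $m_{xyz}\colon A_{x,y}\otimes A_{y,z}\to A_{x,z}$ and units $j_x\colon I\to A_{x,x}$, associative and unital. A semi-Hopf $\mathcal V$-category is a $\mathcal V$-category with each $A_{x,y}$ a comonoid $(A_{x,y},\delta_{xy},\epsilon_{xy})$ in $\mathcal V$ such that all $m_{xyz}$, $j_x$ are comonoid morphisms. A Hopf $\mathcal V$-category has moreover an antipode $s_{xy}\colon A_{x,y}\to A_{y,x}$ with $m_{xyx}\circ(1\otimes s_{xy})\circ\delta_{xy}=j_x\circ\epsilon_{xy}$ and $m_{yxy}\circ(s_{xy}\otimes1)\circ\delta_{xy}=j_y\circ\epsilon_{xy}$. A left integral family: morphisms $t^{xy}\colon I\to A_{x,y}$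 with $m_{zxy}\circ(1\otimes t^{xy})=t^{zy}\circ\epsilon_{zx}$ for all $x,y,z$. A right integral family: morphisms $t^{xy}\colon I\to A_{x,y}$ with $m_{xyz}\circ(t^{xy}\otimes1)=t^{xz}\circ\epsilon_{yz}$ for all $x,y,z$. For a (left or right) integral family $t$ define $p_{xy}:=(\mathrm{ev}_{xy}\otimes1)\circ(1\otimes\delta_{xy})\circ(1\otimes t^{xy})\colon A^*_{x,y}\to A_{x,y}$ and $q_{xy}:=(1\otimes\mathrm{ev}_{xy})\circ(1\otimes\sigma_{A_{x,y},A^*_{x,y}})\circ(\delta_{xy}\otimes1)\circ(t^{xy}\otimes1)\colon A^*_{x,y}\to A_{x,y}$. The family $t$ is left non-singular if every $p_{xx}$ ($x\in X$) is a split epimorphism, right non-singular if every $q_{xx}$ is a split epimorphism, and non-singular if both. *)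

From Stdlib Require Import Utf8.

Unset Implicit Arguments.
Set Universe Polymorphism.

Record Cat := {
  ob :> Type;
  hom : ob -> ob -> Type;
  idm : forall a, hom a a;
  cmp : forall {a b d}, hom b d -> hom a b -> hom a d;
  cmp_idl : forall a b (f : hom a b), cmp (idm b) f = f;
  cmp_idr : forall a b (f : hom a b), cmp f (idm a) = f;
  cmp_assoc : forall a b e d (h : hom e d) (g : hom b e) (f : hom a b),
      cmp h (cmp g f) = cmp (cmp h g) f
}.
Arguments hom {c} _ _.
Arguments idm {c} a.
Arguments cmp {c a b d} _ _.

Declare Scope cat_scope.
Open Scope cat_scope.
Notation "g ∘ f" := (cmp g f) (at level 40, left associativity) : cat_scope.
Notation "1_ a" := (idm a) (at level 0) : cat_scope.

Record MonCat := {
  mcat :> Cat;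
  tens : mcat -> mcat -> mcat;
  tensm : forall {a b c d : mcat}, hom a b -> hom c d -> hom (tens a c) (tens b d);
  tensm_id : forall a b : mcat, tensm (1_ a) (1_ b) = 1_ (tens a b);
  tensm_cmp : forall a b c a' b' c' (g : @hom mcat b c) (f : hom a b)
      (g' : hom b' c') (f' : hom a' b'),
      tensm (g ∘ f) (g' ∘ f') = tensm g g' ∘ tensm f f';
  unit : mcat;
  asc : forall a b c : mcat, hom (tens (tens a b) c) (tens a (tens b c));
  asci : forall a b c : mcat, hom (tens a (tens b c)) (tens (tens a b) c);
  asc_asci : forall a b c, asc a b c ∘ asci a b c = 1_ _;
  asci_asc : forall a b c, asci a b c ∘ asc a b c = 1_ _;
  asc_nat : forall a b c d e f (u : @hom mcat a b) (v : hom c d) (w : hom e f),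
      asc b d f ∘ tensm (tensm u v) w = tensm u (tensm v w) ∘ asc a c e;
  lun : forall a : mcat, hom (tens unit a) a;
  luni : forall a : mcat, hom a (tens unit a);
  lun_luni : forall a, lun a ∘ luni a = 1_ _;
  luni_lun : forall a, luni a ∘ lun a = 1_ _;
  lun_nat : forall a b (u : @hom mcat a b), lun b ∘ tensm (1_ unit) u = u ∘ lun a;
  run : forall a : mcat, hom (tens a unit) a;
  runi : forall a : mcat, hom a (tens a unit);
  run_runi : forall a, run a ∘ runi a = 1_ _;
  runi_run : forall a, runi a ∘ run a = 1_ _;
  run_nat : forall a b (u : @hom mcat a b), run b ∘ tensm u (1_ unit) = u ∘ run a;
  pentagon : forall a b c d : mcat,
      tensm (1_ a) (asc b c d) ∘ asc a (tens b c) d ∘ tensm (asc a b c) (1_ d)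
      = asc a b (tens c d) ∘ asc (tens a b) c d;
  triangle : forall a b : mcat,
      tensm (1_ a) (lun b) ∘ asc a unit b = tensm (run a) (1_ b)
}.
Arguments tens {m} _ _.
Arguments tensm {m a b c d} _ _.
Arguments unit {m}.
Arguments asc {m} a b c.
Arguments asci {m} a b c.
Arguments lun {m} a.
Arguments luni {m} a.
Arguments run {m} a.
Arguments runi {m} a.
Notation "a ⊗ b" := (tens a b) (at level 35, right associativity) : cat_scope.
Notation "f ⊗m g" := (tensm f g) (at level 35, right associativity) : cat_scope.

Record BrMonCat := {
  bmon :> MonCat;
  braid : forall (a b : bmon), hom (a ⊗ b) (b ⊗ a);
  braidi : forall a b : bmon, hom (b ⊗ a) (a ⊗ b);
  braid_braidi : forall a b, braid a b ∘ braidi a b = 1_ _;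
  braidi_braid : forall a b, braidi a b ∘ braid a b = 1_ _;
  braid_nat : forall a b c d (u : @hom bmon a b) (v : hom c d),
      braid b d ∘ (u ⊗m v) = (v ⊗m u) ∘ braid a c;
  hexagon1 : forall a b c : bmon,
      asc b c a ∘ braid a (b ⊗ c) ∘ asc a b c
      = (1_ b ⊗m braid a c) ∘ asc b a c ∘ (braid a b ⊗m 1_ c);
  hexagon2 : forall a b c : bmon,
      asci c a b ∘ braid (a ⊗ b) c ∘ asci a b c
      = (braid a c ⊗m 1_ b) ∘ asci a c b ∘ (1_ a ⊗m braid b c)
}.
Arguments braid {b0} _ _.

(* closed: each functor (- ⊗ a) has a right adjoint [a, -], with evaluation *)
Record BrMonClosedCat := {
  bmcat :> BrMonCat;
  ihom : bmcat -> bmcat -> bmcat;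
  ev : forall a b : bmcat, hom (ihom a b ⊗ a) b;
  curry : forall {a b c : bmcat}, hom (c ⊗ a) b -> hom c (ihom a b);
  curry_ev : forall a b c (f : @hom bmcat (c ⊗ a) b), ev a b ∘ (curry f ⊗m 1_ a) = f;
  curry_uniq : forall a b c (f : @hom bmcat (c ⊗ a) b) (g : hom c (ihom a b)),
      ev a b ∘ (g ⊗m 1_ a) = f -> g = curry f
}.
Arguments ihom {b0} _ _.
Arguments ev {b0} _ _.

Definition dual {V : BrMonClosedCat} (a : V) : V := ihom a unit.

Definition mid4 {V : BrMonCat} (a b c d : V) : hom ((a ⊗ b) ⊗ (c ⊗ d)) ((a ⊗ c) ⊗ (b ⊗ d)) :=
  asci a c (b ⊗ d) ∘ (1_ a ⊗m (asc c b d ∘ (braid b c ⊗m 1_ d) ∘ asci b c d))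
  ∘ asc a b (c ⊗ d).

Record SemiHopfVCat (V : BrMonCat) (X : Type) := {
  HA : X -> X -> V;
  Hm : forall x y z, hom (HA x y ⊗ HA y z) (HA x z);
  Hj : forall x, hom unit (HA x x);
  Hm_assoc : forall x y z w,
      Hm x z w ∘ (Hm x y z ⊗m 1_ _) = Hm x y w ∘ (1_ _ ⊗m Hm y z w) ∘ asc _ _ _;
  Hm_unitl : forall x y, Hm x x y ∘ (Hj x ⊗m 1_ _) = lun _;
  Hm_unitr : forall x y, Hm x y y ∘ (1_ _ ⊗m Hj y) = run _;
  Hdelta : forall x y, hom (HA x y) (HA x y ⊗ HA x y);
  Heps : forall x y, hom (HA x y) unit;
  Hcoassoc : forall x y,
      asc _ _ _ ∘ (Hdelta x y ⊗m 1_ _) ∘ Hdelta x y = (1_ _ ⊗m Hdelta x y) ∘ Hdelta x y;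
  Hcounitl : forall x y, lun _ ∘ (Heps x y ⊗m 1_ _) ∘ Hdelta x y = 1_ _;
  Hcounitr : forall x y, run _ ∘ (1_ _ ⊗m Heps x y) ∘ Hdelta x y = 1_ _;
  (* m_{xyz} is a comonoid morphism (tensor product comonoid on the source) *)
  Hm_delta : forall x y z,
      Hdelta x z ∘ Hm x y z
      = (Hm x y z ⊗m Hm x y z) ∘ mid4 _ _ _ _ ∘ (Hdelta x y ⊗m Hdelta y z);
  Hm_eps : forall x y z, Heps x z ∘ Hm x y z = lun unit ∘ (Heps x y ⊗m Heps y z);
  (* j_x is a comonoid morphism (unit comonoid on I) *)
  Hj_delta : forall x, Hdelta x x ∘ Hj x = (Hj x ⊗m Hj x) ∘ luni unit;
  Hj_eps : forall x, Heps x x ∘ Hj x = 1_ unit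
}.
Arguments HA {V X} s x y.
Arguments Hm {V X} s x y z.
Arguments Hj {V X} s x.
Arguments Hdelta {V X} s x y.
Arguments Heps {V X} s x y.

Record HopfVCat (V : BrMonCat) (X : Type) := {
  shvc :> SemiHopfVCat V X;
  Hs : forall x y, hom (HA shvc x y) (HA shvc y x);
  Hs_left : forall x y,
      Hm shvc x y x ∘ (1_ _ ⊗m Hs x y) ∘ Hdelta shvc x y = Hj shvc x ∘ Heps shvc x y;
  Hs_right : forall x y,
      Hm shvc y x y ∘ (Hs x y ⊗m 1_ _) ∘ Hdelta shvc x y = Hj shvc y ∘ Heps shvc x y
}.
Arguments Hs {V X} h x y.

Definition is_iso {C : Cat} {a b : C} (f : hom a b) : Prop :=
  exists g : hom b a, g ∘ f = 1_ a /\ f ∘ g = 1_ b.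

Definition antipode_invertible {V : BrMonCat} {X : Type} (H : HopfVCat V X) : Prop :=
  forall x y, is_iso (Hs H x y).

Definition integral_family {V : BrMonCat} {X : Type} (A : SemiHopfVCat V X) :=
  forall x y : X, hom unit (HA A x y).

Definition left_integral {V : BrMonCat} {X : Type} (A : SemiHopfVCat V X)
    (t : integral_family A) : Prop :=
  forall x y z, Hm A z x y ∘ (1_ _ ⊗m t x y) ∘ runi _ = t z y ∘ Heps A z x.

Definition right_integral {V : BrMonCat} {X : Type} (A : SemiHopfVCat V X)
    (t : integral_family A) : Prop :=
  forall x y z, Hm A x y z ∘ (t x y ⊗m 1_ _) ∘ luni _ = t x z ∘ Heps A y z.

Definition pmap {V : BrMonClosedCat} {X : Type} (A : SemiHopfVCat V X)
    (t : integral_family A) (x y : X) : hom (dual (HA A x y)) (HA A x y) :=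
  lun _ ∘ (ev _ _ ⊗m 1_ _) ∘ asci _ _ _ ∘ (1_ _ ⊗m Hdelta A x y)
  ∘ (1_ _ ⊗m t x y) ∘ runi _.

Definition qmap {V : BrMonClosedCat} {X : Type} (A : SemiHopfVCat V X)
    (t : integral_family A) (x y : X) : hom (dual (HA A x y)) (HA A x y) :=
  run _ ∘ (1_ _ ⊗m ev _ _) ∘ (1_ _ ⊗m braid (HA A x y) (dual (HA A x y)))
  ∘ asc _ _ _ ∘ (Hdelta A x y ⊗m 1_ _) ∘ (t x y ⊗m 1_ _) ∘ luni _.

Definition split_epi {C : Cat} {a b : C} (f : hom a b) : Prop :=
  exists r : hom b a, f ∘ r = 1_ b.

Definition left_nonsingular {V : BrMonClosedCat} {X : Type} (A : SemiHopfVCat V X)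
    (t : integral_family A) : Prop :=
  forall x : X, split_epi (pmap A t x x).

Definition right_nonsingular {V : BrMonClosedCat} {X : Type} (A : SemiHopfVCat V X)
    (t : integral_family A) : Prop :=
  forall x : X, split_epi (qmap A t x x).

Definition nonsingular {V : BrMonClosedCat} {X : Type} (A : SemiHopfVCat V X)
    (t : integral_family A) : Prop :=
  left_nonsingular A t /\ right_nonsingular A t.

Definition s_comp_t {V : BrMonCat} {X : Type} (H : HopfVCat V X)
    (t : integral_family H) : integral_family H :=
  fun x y => Hs H y x ∘ t y x.

(* 1. Coherence: Kelly's unit lemmas, rearranged pentagons and hexagons, and
      the middle-four interchange mid4 with its associativity and unit laws.
      Repeating these arguments in the reverse braided category yields the
      mirror statements for the inverse interchange.
   2. Convolution: for a comonoid c, maps c -> H_{x,y} compose by convolution,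
      associatively and unitally, so two-sided inverses are unique.  Applied to
      the tensor comonoid H_{x,y} ⊗ H_{y,z} and to the "square" V-category
      H ⊗ H, this shows that s is anti-multiplicative and anti-comultiplicative.
   3. Right integrals: anti-multiplicativity turns the left-integral equation
      for t into the right-integral equation for s ∘ t.
   4. Non-singularity: anti-comultiplicativity and the closed structure give
      q_{s∘t} = s ∘ p_t ∘ (iso) and p_{s∘t} = s ∘ q_t ∘ (iso); split
      epimorphisms are closed under composition, which concludes. *)

Set Universe Polymorphism.
Unset Implicit Arguments.

Section Categories.
Context {C : Cat}.

Lemma cmp_rw2 {b c d : C} (f : hom c d) (g : hom b c) (e : hom b d) :
  f ∘ g = e -> forall {z} (P : hom d z), P ∘ f ∘ g = P ∘ e.
Proof. intros E z P. rewrite <- cmp_assoc. now rewrite E. Qed.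
Lemma cmp_rw3 {a b c d : C} (f : hom c d) (g : hom b c) (h : hom a b) (e : hom a d) :
  f ∘ g ∘ h = e -> forall {z} (P : hom d z), P ∘ f ∘ g ∘ h = P ∘ e.
Proof. intros E z P. rewrite <- E. now rewrite ?cmp_assoc. Qed.
Lemma cmp_rw4 {a0 a b c d : C} (f : hom c d) (g : hom b c) (h : hom a b) (k : hom a0 a)
    (e : hom a0 d) :
  f ∘ g ∘ h ∘ k = e -> forall {z} (P : hom d z), P ∘ f ∘ g ∘ h ∘ k = P ∘ e.
Proof. intros E z P. rewrite <- E. now rewrite ?cmp_assoc. Qed.
Lemma cmp_rw5 {a1 a0 a b c d : C} (f : hom c d) (g : hom b c) (h : hom a b) (k : hom a0 a)
    (l : hom a1 a0) (e : hom a1 d) :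
  f ∘ g ∘ h ∘ k ∘ l = e -> forall {z} (P : hom d z), P ∘ f ∘ g ∘ h ∘ k ∘ l = P ∘ e.
Proof. intros E z P. rewrite <- E. now rewrite ?cmp_assoc. Qed.
Lemma cmp_rw6 {a2 a1 a0 a b c d : C} (f : hom c d) (g : hom b c) (h : hom a b)
    (k : hom a0 a) (l : hom a1 a0) (n : hom a2 a1) (e : hom a2 d) :
  f ∘ g ∘ h ∘ k ∘ l ∘ n = e -> forall {z} (P : hom d z), P ∘ f ∘ g ∘ h ∘ k ∘ l ∘ n = P ∘ e.
Proof. intros E z P. rewrite <- E. now rewrite ?cmp_assoc. Qed.

Lemma cancel_split_epi {a b c : C} (h : hom a b) (hi : hom b a) (f g : hom b c) :
  h ∘ hi = 1_ b -> f ∘ h = g ∘ h -> f = g.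
Proof.
  intros Hh E. rewrite <- (cmp_idr _ _ _ f), <- (cmp_idr _ _ _ g), <- Hh, !cmp_assoc.
  now rewrite E.
Qed.
Lemma cancel_split_mono {a b c : C} (h : hom b c) (hi : hom c b) (f g : hom a b) :
  hi ∘ h = 1_ b -> h ∘ f = h ∘ g -> f = g.
Proof.
  intros Hh E. rewrite <- (cmp_idl _ _ _ f), <- (cmp_idl _ _ _ g), <- Hh, <- !cmp_assoc.
  now rewrite E.
Qed.

Lemma inverse_unique {a b : C} (f g : hom a b) (f' g' : hom b a) :
  f = g -> f' ∘ f = 1_ a -> g ∘ g' = 1_ b -> f' = g'.
Proof.
  intros E H1 H2. rewrite <- (cmp_idr _ _ _ f'), <- H2, <- E, cmp_assoc, H1.
  apply cmp_idl.
Qed.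

Lemma split_epi_cmp {a b c : C} (g : hom b c) (f : hom a b) :
  split_epi g -> split_epi f -> split_epi (g ∘ f).
Proof.
  intros [rg Hg] [rf Hf]. exists (rf ∘ rg).
  rewrite <- cmp_assoc, (cmp_assoc _ _ _ _ _ f rf rg), Hf, cmp_idl. exact Hg.
Qed.
Lemma iso_split_epi {a b : C} (f : hom a b) : is_iso f -> split_epi f.
Proof. intros [g [_ Hfg]]. now exists g. Qed.
End Categories.

(* [nf] normalises composites to left-nested form; [rwN E] rewrites with an
   equation E whose left side is a composite of N morphisms. *)
Ltac nf := rewrite ?cmp_assoc.
Tactic Notation "rw2" uconstr(E) :=
  first [rewrite (cmp_rw2 _ _ _ E) | rewrite E]; rewrite ?cmp_assoc.
Tactic Notation "rw3" uconstr(E) :=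
  first [rewrite (cmp_rw3 _ _ _ _ E) | rewrite E]; rewrite ?cmp_assoc.
Tactic Notation "rw4" uconstr(E) :=
  first [rewrite (cmp_rw4 _ _ _ _ _ E) | rewrite E]; rewrite ?cmp_assoc.
Tactic Notation "rw5" uconstr(E) :=
  first [rewrite (cmp_rw5 _ _ _ _ _ _ E) | rewrite E]; rewrite ?cmp_assoc.
Tactic Notation "rw6" uconstr(E) :=
  first [rewrite (cmp_rw6 _ _ _ _ _ _ _ E) | rewrite E]; rewrite ?cmp_assoc.
Tactic Notation "rw2r" uconstr(E) := rw2 (eq_sym E).
Tactic Notation "rw3r" uconstr(E) := rw3 (eq_sym E).
Tactic Notation "rw4r" uconstr(E) := rw4 (eq_sym E).
Tactic Notation "rw5r" uconstr(E) := rw5 (eq_sym E).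

Section MonoidalBasics.
Context {M : MonCat}.

Lemma tens_lr {a b c d : M} (f : hom a b) (g : hom c d) :
  f ⊗m g = (f ⊗m 1_ d) ∘ (1_ a ⊗m g).
Proof. rewrite <- tensm_cmp. now rewrite cmp_idl, cmp_idr. Qed.
Lemma tens_rl {a b c d : M} (f : hom a b) (g : hom c d) :
  f ⊗m g = (1_ b ⊗m g) ∘ (f ⊗m 1_ c).
Proof. rewrite <- tensm_cmp. now rewrite cmp_idl, cmp_idr. Qed.
Lemma tl_cmp {a b c d : M} (g : hom b c) (f : hom a b) :
  (g ∘ f) ⊗m 1_ d = (g ⊗m 1_ d) ∘ (f ⊗m 1_ d).
Proof. rewrite <- tensm_cmp. now rewrite cmp_idl. Qed.
Lemma tr_cmp {a b c d : M} (g : hom b c) (f : hom a b) :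
  1_ d ⊗m (g ∘ f) = (1_ d ⊗m g) ∘ (1_ d ⊗m f).
Proof. rewrite <- tensm_cmp. now rewrite cmp_idl. Qed.
Lemma swap_lr {a b c d : M} (f : hom a b) (g : hom c d) :
  (f ⊗m 1_ d) ∘ (1_ a ⊗m g) = (1_ b ⊗m g) ∘ (f ⊗m 1_ c).
Proof. now rewrite <- tens_lr, <- tens_rl. Qed.
Lemma tensm_absorb_ll {a b c d e : M} (f : hom b c) (g : hom a b) (w : hom d e) :
  (f ⊗m 1_ e) ∘ (g ⊗m w) = (f ∘ g) ⊗m w.
Proof. rewrite <- tensm_cmp. now rewrite cmp_idl. Qed.
Lemma tensm_absorb_lr {a b c d e : M} (f : hom b c) (g : hom a b) (w : hom d e) :
  (f ⊗m w) ∘ (g ⊗m 1_ d) = (f ∘ g) ⊗m w.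
Proof. rewrite <- tensm_cmp. now rewrite cmp_idr. Qed.
Lemma tensm_absorb_rl {a b c d e : M} (f : hom b c) (g : hom a b) (w : hom d e) :
  (1_ e ⊗m f) ∘ (w ⊗m g) = w ⊗m (f ∘ g).
Proof. rewrite <- tensm_cmp. now rewrite cmp_idl. Qed.
Lemma tensm_absorb_rr {a b c d e : M} (f : hom b c) (g : hom a b) (w : hom d e) :
  (w ⊗m f) ∘ (1_ d ⊗m g) = w ⊗m (f ∘ g).
Proof. rewrite <- tensm_cmp. now rewrite cmp_idr. Qed.
Lemma tensm_cmp3_l {a b c d e f : M} (x : hom c d) (y : hom b c) (z : hom a b) (h : hom e f) :
  (x ∘ y ∘ z) ⊗m h = (x ⊗m 1_ f) ∘ (y ⊗m h) ∘ (z ⊗m 1_ e).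
Proof. rewrite <- !tensm_cmp. now rewrite cmp_idl, cmp_idr. Qed.
Lemma tensm_cmp3_r {a b c d e f : M} (x : hom c d) (y : hom b c) (z : hom a b) (h : hom e f) :
  h ⊗m (x ∘ y ∘ z) = (1_ f ⊗m x) ∘ (h ⊗m y) ∘ (1_ e ⊗m z).
Proof. rewrite <- !tensm_cmp. now rewrite cmp_idl, cmp_idr. Qed.
Lemma tl_cmp_eq {a b c d : M} (f : hom b c) (g : hom a b) (e : hom a c) :
  f ∘ g = e -> (f ⊗m 1_ d) ∘ (g ⊗m 1_ d) = e ⊗m 1_ d.
Proof. intros E. now rewrite <- tl_cmp, E. Qed.
Lemma tr_cmp_eq {a b c d : M} (f : hom b c) (g : hom a b) (e : hom a c) :
  f ∘ g = e -> (1_ d ⊗m f) ∘ (1_ d ⊗m g) = 1_ d ⊗m e.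
Proof. intros E. now rewrite <- tr_cmp, E. Qed.
Lemma tr_cmp3_eq {a b c d e : M} (f : hom c d) (g : hom b c) (h : hom a b) (k : hom a d) :
  f ∘ g ∘ h = k -> (1_ e ⊗m f) ∘ (1_ e ⊗m g) ∘ (1_ e ⊗m h) = 1_ e ⊗m k.
Proof. intros E. now rewrite <- !tr_cmp, E. Qed.
Lemma tl_iso {a b c : M} (f : hom a b) (g : hom b a) :
  f ∘ g = 1_ b -> (f ⊗m 1_ c) ∘ (g ⊗m 1_ c) = 1_ _.
Proof. intros E. now rewrite <- tl_cmp, E, tensm_id. Qed.
Lemma tr_iso {a b c : M} (f : hom a b) (g : hom b a) :
  f ∘ g = 1_ b -> (1_ c ⊗m f) ∘ (1_ c ⊗m g) = 1_ _.
Proof. intros E. now rewrite <- tr_cmp, E, tensm_id. Qed.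
Lemma tensm_iso {a b c d : M} (f : hom a b) (f' : hom b a) (g : hom c d) (g' : hom d c) :
  f ∘ f' = 1_ b -> g ∘ g' = 1_ d -> (f ⊗m g) ∘ (f' ⊗m g') = 1_ _.
Proof. intros E1 E2. rewrite <- tensm_cmp, E1, E2. apply tensm_id. Qed.

Lemma tl_asc_asci (a b c d : M) : (asc a b c ⊗m 1_ d) ∘ (asci a b c ⊗m 1_ d) = 1_ _.
Proof. apply tl_iso, asc_asci. Qed.
Lemma tl_asci_asc (a b c d : M) : (asci a b c ⊗m 1_ d) ∘ (asc a b c ⊗m 1_ d) = 1_ _.
Proof. apply tl_iso, asci_asc. Qed.
Lemma tr_asc_asci (a b c d : M) : (1_ d ⊗m asc a b c) ∘ (1_ d ⊗m asci a b c) = 1_ _.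
Proof. apply tr_iso, asc_asci. Qed.
Lemma tr_asci_asc (a b c d : M) : (1_ d ⊗m asci a b c) ∘ (1_ d ⊗m asc a b c) = 1_ _.
Proof. apply tr_iso, asci_asc. Qed.

Lemma tens_unit_l_inj {a b : M} (f g : hom a b) : 1_ unit ⊗m f = 1_ unit ⊗m g -> f = g.
Proof.
  intros E.
  assert (Hf : f = lun b ∘ (1_ unit ⊗m f) ∘ luni a).
  { rewrite lun_nat, <- cmp_assoc, lun_luni. now rewrite cmp_idr. }
  assert (Hg : g = lun b ∘ (1_ unit ⊗m g) ∘ luni a).
  { rewrite lun_nat, <- cmp_assoc, lun_luni. now rewrite cmp_idr. }
  now rewrite Hf, Hg, E.
Qed.
Lemma tens_unit_r_inj {a b : M} (f g : hom a b) : f ⊗m 1_ unit = g ⊗m 1_ unit -> f = g.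
Proof.
  intros E.
  assert (Hf : f = run b ∘ (f ⊗m 1_ unit) ∘ runi a).
  { rewrite run_nat, <- cmp_assoc, run_runi. now rewrite cmp_idr. }
  assert (Hg : g = run b ∘ (g ⊗m 1_ unit) ∘ runi a).
  { rewrite run_nat, <- cmp_assoc, run_runi. now rewrite cmp_idr. }
  now rewrite Hf, Hg, E.
Qed.

Lemma asci_nat (a b c d e f : M) (u : hom a b) (v : hom c d) (w : hom e f) :
  asci b d f ∘ (u ⊗m (v ⊗m w)) = ((u ⊗m v) ⊗m w) ∘ asci a c e.
Proof.
  apply (cancel_split_mono (asc b d f) (asci _ _ _)); [apply asci_asc|].
  apply (cancel_split_epi (asc a c e) (asci _ _ _)); [apply asc_asci|].
  rewrite !cmp_assoc, asc_asci, cmp_idl. rewrite asc_nat.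
  rewrite <- !cmp_assoc, asci_asc, cmp_idr. reflexivity.
Qed.
Lemma runi_nat {a b : M} (f : hom a b) : runi b ∘ f = (f ⊗m 1_ unit) ∘ runi a.
Proof.
  apply (cancel_split_mono (run b) (runi b)); [apply runi_run|]. nf.
  rewrite run_runi, cmp_idl, run_nat, <- cmp_assoc, run_runi. now rewrite cmp_idr.
Qed.
Lemma luni_nat {a b : M} (f : hom a b) : luni b ∘ f = (1_ unit ⊗m f) ∘ luni a.
Proof.
  apply (cancel_split_mono (lun b) (luni b)); [apply luni_lun|]. nf.
  rewrite lun_luni, cmp_idl, lun_nat, <- cmp_assoc, lun_luni. now rewrite cmp_idr.
Qed.
End MonoidalBasics.

Ltac simp_iso := repeat progress (rewrite ?cmp_assoc;
   try rw2 (asc_asci _ _ _ _); try rw2 (asci_asc _ _ _ _);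
   try rw2 (lun_luni _ _); try rw2 (luni_lun _ _);
   try rw2 (run_runi _ _); try rw2 (runi_run _ _);
   try rw2 (tl_asc_asci _ _ _ _); try rw2 (tl_asci_asc _ _ _ _);
   try rw2 (tr_asc_asci _ _ _ _); try rw2 (tr_asci_asc _ _ _ _);
   rewrite ?cmp_idr, ?cmp_idl, ?tensm_id).

Section MonoidalCoherence.
Context {M : MonCat}.

Lemma kelly_l (a b : M) : lun (a ⊗ b) ∘ asc unit a b = lun a ⊗m 1_ b.
Proof.
  apply tens_unit_l_inj.
  apply (cancel_split_epi (asc unit (unit ⊗ a) b) (asci _ _ _)); [apply asc_asci|].
  apply (cancel_split_epi (asc unit unit a ⊗m 1_ b) (asci unit unit a ⊗m 1_ b));
    [apply tl_iso, asc_asci|].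
  rewrite tr_cmp. rw3 (pentagon M unit unit a b).
  rw2 (triangle M unit (a ⊗ b)).
  rewrite <- (tensm_id M a b), <- asc_nat, <- triangle, tl_cmp. nf.
  rw2 (asc_nat M _ _ _ _ _ _ (1_ unit) (lun a) (1_ b)). reflexivity.
Qed.
Lemma kelly_r (a b : M) : (1_ a ⊗m run b) ∘ asc a b unit = run (a ⊗ b).
Proof.
  apply tens_unit_r_inj.
  apply (cancel_split_mono (asc a b unit) (asci _ _ _)); [apply asci_asc|].
  symmetry. rewrite <- (triangle M (a ⊗ b) unit), <- (tensm_id M a b). nf.
  rewrite asc_nat, <- cmp_assoc, <- (pentagon M a b unit unit). nf.
  rewrite <- tr_cmp, triangle.
  rewrite <- (asc_nat M _ _ _ _ _ _ (1_ a) (run b) (1_ unit)).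
  now rewrite tl_cmp, cmp_assoc.
Qed.
Lemma kelly_l_asci (a b : M) : lun (a ⊗ b) = (lun a ⊗m 1_ b) ∘ asci unit a b.
Proof. rewrite <- kelly_l, <- cmp_assoc, asc_asci. now rewrite cmp_idr. Qed.
Lemma kelly_r_asci (a b : M) : run (a ⊗ b) ∘ asci a b unit = 1_ a ⊗m run b.
Proof. rewrite <- kelly_r, <- cmp_assoc, asc_asci. apply cmp_idr. Qed.
Lemma kelly_runi (a b : M) : asci a b unit ∘ (1_ a ⊗m runi b) = runi (a ⊗ b).
Proof.
  apply (cancel_split_mono (run (a ⊗ b)) (runi _)); [apply runi_run|]. nf.
  rewrite kelly_r_asci, <- tr_cmp, run_runi, tensm_id. now rewrite run_runi.
Qed.
Lemma triangle_asci (a b : M) : (run a ⊗m 1_ b) ∘ asci a unit b = 1_ a ⊗m lun b.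
Proof. rewrite <- triangle, <- cmp_assoc, asc_asci. apply cmp_idr. Qed.

Lemma lun_run_unit : lun unit = run (unit : M).
Proof.
  assert (Hlun : lun (unit ⊗ unit) = 1_ unit ⊗m lun (unit : M)).
  { apply (cancel_split_mono (lun unit) (luni unit)); [apply luni_lun|].
    now rewrite lun_nat. }
  apply tens_unit_r_inj. now rewrite <- triangle, <- kelly_l, Hlun.
Qed.
Lemma luni_runi_unit : luni (unit : M) = runi unit.
Proof.
  apply (cancel_split_mono (lun unit) (luni unit)); [apply luni_lun|].
  now rewrite lun_luni, lun_run_unit, run_runi.
Qed.

Lemma pentagon_1 (b c d w : M) :
  asci b c (d ⊗ w) ∘ (1_ b ⊗m asc c d w)
  = asc (b ⊗ c) d w ∘ (asci b c d ⊗m 1_ w) ∘ asci b (c ⊗ d) w.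
Proof.
  apply (cancel_split_epi (asc b (c ⊗ d) w ∘ (asc b c d ⊗m 1_ w))
                          ((asci b c d ⊗m 1_ w) ∘ asci b (c ⊗ d) w)).
  { simp_iso. reflexivity. }
  nf. rw3 (pentagon M b c d w). simp_iso. reflexivity.
Qed.
Lemma pentagon_2 (a b c d : M) :
  asc a (b ⊗ c) d ∘ (asc a b c ⊗m 1_ d) ∘ asci (a ⊗ b) c d
  = (1_ a ⊗m asci b c d) ∘ asc a b (c ⊗ d).
Proof.
  apply (cancel_split_mono (1_ a ⊗m asc b c d) (1_ a ⊗m asci b c d)); [apply tr_asci_asc|].
  nf. rw3 (pentagon M a b c d). simp_iso. reflexivity.
Qed.
Lemma pentagon_3 (a b c d : M) :
  (asc a b c ⊗m 1_ d) ∘ asci (a ⊗ b) c d ∘ asci a b (c ⊗ d)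
  = asci a (b ⊗ c) d ∘ (1_ a ⊗m asci b c d).
Proof.
  apply (cancel_split_mono (asc a (b ⊗ c) d) (asci _ _ _)); [apply asci_asc|].
  nf. rw3 (pentagon_2 a b c d). simp_iso. reflexivity.
Qed.
Lemma pentagon_4 (a b c d : M) :
  asc a (b ⊗ c) d ∘ (asc a b c ⊗m 1_ d) ∘ asci (a ⊗ b) c d ∘ asci a b (c ⊗ d)
  = 1_ a ⊗m asci b c d.
Proof. rewrite pentagon_2. simp_iso. reflexivity. Qed.
End MonoidalCoherence.

Section BraidedBasics.
Context {B : BrMonCat}.

Lemma lun_braid (a : B) : lun a ∘ braid a unit = run a.
Proof.
  apply tens_unit_r_inj.
  apply (cancel_split_mono (braid a unit) (braidi B a unit)); [apply braidi_braid|].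
  rewrite tl_cmp, <- kelly_l. nf. rewrite <- lun_nat.
  rw3 (eq_sym (hexagon1 B a unit unit)).
  rewrite kelly_l, <- braid_nat, <- cmp_assoc, triangle. reflexivity.
Qed.
Lemma braid_unit_r (a : B) : braid a unit = luni a ∘ run a.
Proof. rewrite <- lun_braid, cmp_assoc, luni_lun. now rewrite cmp_idl. Qed.
Lemma run_braid (a : B) : run a ∘ braid unit a = lun a.
Proof.
  apply tens_unit_l_inj.
  apply (cancel_split_mono (braid unit a) (braidi B unit a)); [apply braidi_braid|].
  rewrite tr_cmp, <- kelly_r_asci. nf. rewrite <- run_nat.
  rw3 (eq_sym (hexagon2 B unit unit a)).
  rewrite kelly_r_asci, <- braid_nat, <- cmp_assoc, triangle_asci. reflexivity.
Qed.
Lemma braid_unit_l (a : B) : braid unit a = runi a ∘ lun a.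
Proof. rewrite <- run_braid, cmp_assoc, runi_run. now rewrite cmp_idl. Qed.

Lemma braid_tens_r (a b c : B) :
  braid a (b ⊗ c)
  = asci b c a ∘ (1_ b ⊗m braid a c) ∘ asc b a c ∘ (braid a b ⊗m 1_ c) ∘ asci a b c.
Proof. rw3r (hexagon1 B a b c). simp_iso. reflexivity. Qed.
Lemma braid_tens_l (a b c : B) :
  braid (a ⊗ b) c
  = asc c a b ∘ (braid a c ⊗m 1_ b) ∘ asci a c b ∘ (1_ a ⊗m braid b c) ∘ asc a b c.
Proof. rw3r (hexagon2 B a b c). simp_iso. reflexivity. Qed.

Lemma tl_braid_braidi (a b c : B) : (braid a b ⊗m 1_ c) ∘ (braidi B a b ⊗m 1_ c) = 1_ _.
Proof. apply tl_iso, braid_braidi. Qed.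
Lemma tl_braidi_braid (a b c : B) : (braidi B a b ⊗m 1_ c) ∘ (braid a b ⊗m 1_ c) = 1_ _.
Proof. apply tl_iso, braidi_braid. Qed.
Lemma tr_braid_braidi (a b c : B) : (1_ c ⊗m braid a b) ∘ (1_ c ⊗m braidi B a b) = 1_ _.
Proof. apply tr_iso, braid_braidi. Qed.
Lemma tr_braidi_braid (a b c : B) : (1_ c ⊗m braidi B a b) ∘ (1_ c ⊗m braid a b) = 1_ _.
Proof. apply tr_iso, braidi_braid. Qed.
End BraidedBasics.

Ltac simp_br := repeat progress (simp_iso;
   try rw2 (braid_braidi _ _ _); try rw2 (braidi_braid _ _ _);
   try rw2 (tl_braid_braidi _ _ _); try rw2 (tl_braidi_braid _ _ _);
   try rw2 (tr_braid_braidi _ _ _); try rw2 (tr_braidi_braid _ _ _);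
   try rw2 (tr_iso _ _ (tl_braid_braidi _ _ _));
   try rw2 (tr_iso _ _ (tl_braidi_braid _ _ _));
   try rw2 (tl_iso _ _ (tr_braid_braidi _ _ _));
   try rw2 (tl_iso _ _ (tr_braidi_braid _ _ _));
   rewrite ?cmp_idr, ?cmp_idl, ?tensm_id).

Section InverseBraiding.
Context {B : BrMonCat}.

(* The inverse braiding is natural and satisfies the hexagons; hence it is
   itself a braiding on the same monoidal category. *)
Lemma braidi_nat (a b c d : B) (u : hom a b) (v : hom c d) :
  braidi B d b ∘ (u ⊗m v) = (v ⊗m u) ∘ braidi B c a.
Proof.
  apply (cancel_split_mono (braid d b) (braidi B d b)); [apply braidi_braid|].
  rewrite cmp_assoc, braid_braidi, cmp_idl, cmp_assoc, braid_nat.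
  simp_br. reflexivity.
Qed.
Lemma braidi_hex1 (a b c : B) :
  asc b c a ∘ braidi B (b ⊗ c) a ∘ asc a b c
  = (1_ b ⊗m braidi B c a) ∘ asc b a c ∘ (braidi B b a ⊗m 1_ c).
Proof. apply (inverse_unique _ _ _ _ (hexagon2 B b c a)); simp_br; reflexivity. Qed.
Lemma braidi_hex2 (a b c : B) :
  asci c a b ∘ braidi B c (a ⊗ b) ∘ asci a b c
  = (braidi B c a ⊗m 1_ b) ∘ asci a c b ∘ (1_ a ⊗m braidi B c b).
Proof. apply (inverse_unique _ _ _ _ (hexagon1 B c a b)); simp_br; reflexivity. Qed.

Lemma braidi_unit_r (a : B) : braidi B a unit = runi a ∘ lun a.
Proof.
  apply (cancel_split_mono (braid a unit) (braidi B a unit)); [apply braidi_braid|].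
  rewrite braid_braidi, braid_unit_r. simp_iso. reflexivity.
Qed.
Lemma braidi_unit_l (a : B) : braidi B unit a = luni a ∘ run a.
Proof.
  apply (cancel_split_mono (braid unit a) (braidi B unit a)); [apply braidi_braid|].
  rewrite braid_braidi, braid_unit_l. simp_iso. reflexivity.
Qed.
Lemma braidi_tens_l (a b c : B) :
  braidi B (a ⊗ b) c
  = asci a b c ∘ (1_ a ⊗m braidi B b c) ∘ asc a c b ∘ (braidi B a c ⊗m 1_ b) ∘ asci c a b.
Proof.
  apply (inverse_unique _ _ _ _ (braid_tens_l a b c)); [apply braidi_braid|].
  simp_br. reflexivity.
Qed.

Lemma point_braid_slide (W D : B) (v : hom unit W) :
  (v ⊗m 1_ D) ∘ luni D = braid D W ∘ (1_ D ⊗m v) ∘ runi D.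
Proof. rewrite braid_nat, braid_unit_r. simp_iso. reflexivity. Qed.
Lemma point_braidi_slide (W D : B) (v : hom unit W) :
  (v ⊗m 1_ D) ∘ luni D = braidi B W D ∘ (1_ D ⊗m v) ∘ runi D.
Proof. rewrite braidi_nat, braidi_unit_l. simp_iso. reflexivity. Qed.
End InverseBraiding.

Definition reverse_braiding (B : BrMonCat) : BrMonCat :=
  {| bmon := bmon B; braid := fun a b => braidi B b a; braidi := fun a b => braid b a;
     braid_braidi := fun a b => braidi_braid B b a;
     braidi_braid := fun a b => braid_braidi B b a;
     braid_nat := @braidi_nat B; hexagon1 := @braidi_hex1 B; hexagon2 := @braidi_hex2 B |}.

Section Interchange.
Context {B : BrMonCat}.

Definition xchg (b c d : B) : hom (b ⊗ (c ⊗ d)) (c ⊗ (b ⊗ d)) :=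
  asc c b d ∘ (braid b c ⊗m 1_ d) ∘ asci b c d.

Lemma mid4_xchg (a b c d : B) :
  mid4 a b c d = asci a c (b ⊗ d) ∘ (1_ a ⊗m xchg b c d) ∘ asc a b (c ⊗ d).
Proof. reflexivity. Qed.

Lemma xchg_nat (b b' c c' d d' : B) (u : hom b b') (v : hom c c') (w : hom d d') :
  xchg b' c' d' ∘ (u ⊗m (v ⊗m w)) = (v ⊗m (u ⊗m w)) ∘ xchg b c d.
Proof.
  unfold xchg. nf. rw2 (asci_nat _ _ _ _ _ _ u v w).
  rw2 (tensm_absorb_ll (braid b' c') (u ⊗m v) w).
  rewrite braid_nat, <- tensm_absorb_lr. nf.
  rw2 (asc_nat _ _ _ _ _ _ _ v u w). reflexivity.
Qed.

Lemma xchg_asc (b c d w : B) :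
  xchg b c (d ⊗ w) ∘ (1_ b ⊗m asc c d w)
  = (1_ c ⊗m asc b d w) ∘ asc c (b ⊗ d) w ∘ (xchg b c d ⊗m 1_ w) ∘ asci b (c ⊗ d) w.
Proof.
  unfold xchg. nf. rw2 (pentagon_1 b c d w).
  rewrite <- (tensm_id _ d w).
  rw2r (asc_nat _ _ _ _ _ _ _ (braid b c) (1_ d) (1_ w)).
  rw2 (eq_sym (pentagon _ c b d w)). rewrite !tl_cmp. nf. reflexivity.
Qed.

Lemma xchg_tens_mid (b c e w : B) :
  xchg b (c ⊗ e) w
  = asci c e (b ⊗ w) ∘ (1_ c ⊗m xchg b e w) ∘ xchg b c (e ⊗ w) ∘ (1_ b ⊗m asc c e w).
Proof.
  unfold xchg. rewrite braid_tens_r, !tl_cmp, !tr_cmp. nf.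
  rw2 (pentagon_1 b c e w).
  rewrite <- (tensm_id _ e w).
  rw2r (asc_nat _ _ _ _ _ _ _ (braid b c) (1_ e) (1_ w)).
  rw2 (eq_sym (pentagon _ c b e w)). simp_iso.
  rw2r (asc_nat _ _ _ _ _ _ _ (1_ c) (braid b e) (1_ w)).
  rw2 (pentagon_1 c e b w). simp_iso. reflexivity.
Qed.
Lemma xchg_tens_first (b d e f : B) :
  xchg (b ⊗ d) e f
  = (1_ e ⊗m asci b d f) ∘ xchg b e (d ⊗ f) ∘ (1_ b ⊗m xchg d e f) ∘ asc b d (e ⊗ f).
Proof.
  unfold xchg. rewrite braid_tens_l, !tl_cmp, !tr_cmp. nf.
  rw2 (pentagon_1 b e d f).
  rewrite <- (tensm_id _ d f).
  rw2r (asc_nat _ _ _ _ _ _ _ (braid b e) (1_ d) (1_ f)).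
  rw2 (eq_sym (pentagon _ e b d f)). simp_iso.
  rw2 (asci_nat _ _ _ _ _ _ (1_ b) (braid d e) (1_ f)).
  rw2r (pentagon_3 b d e f). simp_iso. reflexivity.
Qed.
Lemma xchg_mid4 (b c d e f : B) :
  (1_ (c ⊗ e) ⊗m asc b d f) ∘ asci c e ((b ⊗ d) ⊗ f) ∘ (1_ c ⊗m xchg (b ⊗ d) e f)
  ∘ asc c (b ⊗ d) (e ⊗ f) ∘ (xchg b c d ⊗m 1_ (e ⊗ f)) ∘ asci b (c ⊗ d) (e ⊗ f)
  = xchg b (c ⊗ e) (d ⊗ f) ∘ (1_ b ⊗m mid4 c d e f).
Proof.
  rewrite xchg_tens_mid, xchg_tens_first, mid4_xchg, !tr_cmp. nf. simp_iso.
  rw2 (xchg_nat _ _ _ _ _ _ (1_ b) (1_ c) (xchg d e f)).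
  rw2 (asci_nat _ _ _ _ _ _ (1_ c) (1_ e) (asci b d f)). simp_iso.
  rw4r (xchg_asc b c d (e ⊗ f)). simp_iso. reflexivity.
Qed.

Lemma mid4_assoc (a b c d e f : B) :
  (asc a c e ⊗m asc b d f) ∘ mid4 (a ⊗ c) (b ⊗ d) e f ∘ (mid4 a b c d ⊗m 1_ (e ⊗ f))
  = mid4 a b (c ⊗ e) (d ⊗ f) ∘ (1_ (a ⊗ b) ⊗m mid4 c d e f) ∘ asc (a ⊗ b) (c ⊗ d) (e ⊗ f).
Proof.
  rewrite (mid4_xchg a b (c ⊗ e) (d ⊗ f)). nf.
  rewrite <- (tensm_id _ a b).
  rw2 (asc_nat _ _ _ _ _ _ _ (1_ a) (1_ b) (mid4 c d e f)).
  rw2r (tr_cmp (xchg b (c ⊗ e) (d ⊗ f)) (1_ b ⊗m mid4 c d e f)).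
  rewrite <- xchg_mid4.
  apply (cancel_split_mono (asc a (c ⊗ e) (b ⊗ (d ⊗ f))) (asci _ _ _)); [apply asci_asc|].
  apply (cancel_split_epi (asci (a ⊗ b) (c ⊗ d) (e ⊗ f) ∘ asci a b ((c ⊗ d) ⊗ (e ⊗ f)))
                          (asc a b _ ∘ asc (a ⊗ b) _ _)); [simp_iso; reflexivity|].
  simp_iso.
  rewrite (mid4_xchg (a ⊗ c)), (mid4_xchg a b c d), !tl_cmp. nf.
  rw3 (pentagon_3 a b (c ⊗ d) (e ⊗ f)).
  rw2r (asci_nat _ _ _ _ _ _ (1_ a) (xchg b c d) (1_ (e ⊗ f))).
  rw3r (pentagon_1 a c (b ⊗ d) (e ⊗ f)).
  rewrite <- (tensm_id _ a c).
  rw2r (asci_nat _ _ _ _ _ _ (1_ a) (1_ c) (xchg (b ⊗ d) e f)).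
  rewrite (tens_rl (asc a c e) (asc b d f)), <- (tensm_id _ a (c ⊗ e)). nf.
  rw2 (asc_nat _ _ _ _ _ _ _ (1_ a) (1_ (c ⊗ e)) (asc b d f)).
  rw4 (pentagon_4 a c e ((b ⊗ d) ⊗ f)).
  rewrite <- !tr_cmp. nf. reflexivity.
Qed.

Lemma mid4_nat (a a' b b' c c' d d' : B)
    (u : hom a a') (v : hom b b') (w : hom c c') (z : hom d d') :
  mid4 a' b' c' d' ∘ ((u ⊗m v) ⊗m (w ⊗m z)) = ((u ⊗m w) ⊗m (v ⊗m z)) ∘ mid4 a b c d.
Proof.
  rewrite !mid4_xchg. nf. rw2 (asc_nat _ _ _ _ _ _ _ u v (w ⊗m z)).
  rw2 (tensm_absorb_rl (xchg b' c' d') (v ⊗m (w ⊗m z)) u).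
  rewrite xchg_nat, <- (tensm_absorb_rr (w ⊗m (v ⊗m z)) (xchg b c d) u). nf.
  rw2 (asci_nat _ _ _ _ _ _ u w (v ⊗m z)). reflexivity.
Qed.
Lemma mid4_natL (a a' b c c' d : B) (u : hom a a') (w : hom c c') :
  ((u ⊗m w) ⊗m 1_ (b ⊗ d)) ∘ mid4 a b c d = mid4 a' b c' d ∘ ((u ⊗m 1_ b) ⊗m (w ⊗m 1_ d)).
Proof. rewrite mid4_nat. now rewrite tensm_id. Qed.
Lemma mid4_natR (a b b' c d d' : B) (v : hom b b') (z : hom d d') :
  (1_ (a ⊗ c) ⊗m (v ⊗m z)) ∘ mid4 a b c d = mid4 a b' c d' ∘ ((1_ a ⊗m v) ⊗m (1_ c ⊗m z)).
Proof. rewrite mid4_nat. now rewrite tensm_id. Qed.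
Lemma mid4_natL2 (a a' b b' c d : B) (u : hom a a') (v : hom b b') :
  mid4 a' b' c d ∘ ((u ⊗m v) ⊗m 1_ (c ⊗ d)) = ((u ⊗m 1_ c) ⊗m (v ⊗m 1_ d)) ∘ mid4 a b c d.
Proof. rewrite <- (tensm_id _ c d). apply mid4_nat. Qed.
Lemma mid4_natR2 (a b c c' d d' : B) (w : hom c c') (z : hom d d') :
  mid4 a b c' d' ∘ (1_ (a ⊗ b) ⊗m (w ⊗m z)) = ((1_ a ⊗m w) ⊗m (1_ b ⊗m z)) ∘ mid4 a b c d.
Proof. rewrite <- (tensm_id _ a b). apply mid4_nat. Qed.

Lemma mid4_lun (a b : B) :
  lun (a ⊗ b) ∘ (lun unit ⊗m 1_ (a ⊗ b)) ∘ mid4 unit a unit b = lun a ⊗m lun b.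
Proof.
  rewrite mid4_xchg. nf. rw2r (kelly_l_asci unit (a ⊗ b)).
  rw2 (lun_nat _ _ _ (xchg a unit b)). rw2 (kelly_l a (unit ⊗ b)).
  unfold xchg. nf. rw2 (kelly_l a b). rw2r (tl_cmp (lun a) (braid a unit)).
  rewrite lun_braid. rw2 (triangle_asci a b). rewrite <- tens_rl. reflexivity.
Qed.
Lemma mid4_run (a b : B) :
  run (a ⊗ b) ∘ (1_ (a ⊗ b) ⊗m lun unit) ∘ mid4 a unit b unit = run a ⊗m run b.
Proof.
  rewrite mid4_xchg. nf. rewrite <- (tensm_id _ a b).
  rw2r (asci_nat _ _ _ _ _ _ (1_ a) (1_ b) (lun unit)).
  rw2 (kelly_r_asci a b). rewrite <- !tr_cmp.
  unfold xchg. nf. rw2 (triangle _ b unit). rw2 (run_nat _ _ _ (run b)).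
  rw2 (run_nat _ _ _ (braid unit b)). rw2 (run_braid b). rw2 (kelly_r_asci unit b).
  rw2 (lun_nat _ _ _ (run b)). rewrite tr_cmp. nf. rw2 (triangle _ a (b ⊗ unit)).
  rewrite <- tens_rl. reflexivity.
Qed.

Lemma braid_tens_r_xchg (a b c : B) :
  asci b c a ∘ (1_ b ⊗m braid a c) ∘ xchg a b c = braid a (b ⊗ c).
Proof. rewrite braid_tens_r. unfold xchg. nf. reflexivity. Qed.
Lemma xchg_braid (b c d : B) :
  xchg b c d ∘ (1_ b ⊗m braid d c) = braid (b ⊗ d) c ∘ asci b d c.
Proof. rewrite braid_tens_l. unfold xchg. simp_iso. reflexivity. Qed.
End Interchange.

Section ReverseInterchange.
Context {B : BrMonCat}.

Lemma mid4_reverse_inv (a b c d : B) :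
  @mid4 (reverse_braiding B) a b c d ∘ @mid4 B a c b d = 1_ _.
Proof. unfold mid4. simpl. rewrite !tr_cmp. simp_br. reflexivity. Qed.
Lemma mid4_inv_reverse (a b c d : B) :
  @mid4 B a c b d ∘ @mid4 (reverse_braiding B) a b c d = 1_ _.
Proof. unfold mid4. simpl. rewrite !tr_cmp. simp_br. reflexivity. Qed.

(* Associativity and unit laws for the inverse interchange, obtained by
   inverting those for the reverse braiding. *)
Lemma mid4_coassoc (a b c d e f : B) :
  (mid4 a c b d ⊗m 1_ (e ⊗ f)) ∘ mid4 (a ⊗ c) e (b ⊗ d) f ∘ (asci a c e ⊗m asci b d f)
  = asci (a ⊗ b) (c ⊗ d) (e ⊗ f) ∘ (1_ (a ⊗ b) ⊗m mid4 c e d f) ∘ mid4 a (c ⊗ e) b (d ⊗ f).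
Proof.
  apply (inverse_unique _ _ _ _ (@mid4_assoc (reverse_braiding B) a b c d e f)).
  - nf. rw2 (tensm_iso _ _ _ _ (asci_asc _ _ _ _) (asci_asc _ _ _ _)). rewrite cmp_idr.
    rw2 (mid4_inv_reverse (a ⊗ c) (b ⊗ d) e f). rewrite cmp_idr.
    rewrite <- tl_cmp, mid4_inv_reverse. apply tensm_id.
  - simp_iso. rw2 (tr_iso _ _ (mid4_reverse_inv c d e f)). simp_iso.
    apply mid4_reverse_inv.
Qed.
Lemma lun_tens_mid4 (a b : B) :
  (lun a ⊗m lun b) ∘ mid4 unit unit a b ∘ (luni unit ⊗m 1_ (a ⊗ b)) = lun (a ⊗ b).
Proof.
  pose proof (@mid4_lun (reverse_braiding B) a b) as E. cbn [reverse_braiding bmon] in E.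
  rewrite <- E. nf.
  rw2 (mid4_reverse_inv unit a unit b). rewrite cmp_idr.
  rw2 (tl_iso _ _ (lun_luni _ unit)). apply cmp_idr.
Qed.
Lemma run_tens_mid4 (a b : B) :
  (run a ⊗m run b) ∘ mid4 a b unit unit ∘ (1_ (a ⊗ b) ⊗m luni unit) = run (a ⊗ b).
Proof.
  pose proof (@mid4_run (reverse_braiding B) a b) as E. cbn [reverse_braiding bmon] in E.
  rewrite <- E. nf.
  rw2 (mid4_reverse_inv a unit b unit). rewrite cmp_idr.
  rw2 (tr_iso _ _ (lun_luni _ unit)). apply cmp_idr.
Qed.
End ReverseInterchange.

Section Convolution.
Context {M : MonCat} {Xo : Type} (Ob : Xo -> Xo -> M)
  (mm : forall x y z, hom (Ob x y ⊗ Ob y z) (Ob x z)) (jj : forall x, hom unit (Ob x x))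
  (massoc : forall x y z w,
      mm x z w ∘ (mm x y z ⊗m 1_ _) = mm x y w ∘ (1_ _ ⊗m mm y z w) ∘ asc _ _ _)
  (munitl : forall x y, mm x x y ∘ (jj x ⊗m 1_ _) = lun _)
  (munitr : forall x y, mm x y y ∘ (1_ _ ⊗m jj y) = run _)
  (c : M) (d : hom c (c ⊗ c)) (e : hom c unit)
  (coassoc : asc c c c ∘ (d ⊗m 1_ c) ∘ d = (1_ c ⊗m d) ∘ d)
  (counitl : lun c ∘ (e ⊗m 1_ c) ∘ d = 1_ c)
  (counitr : run c ∘ (1_ c ⊗m e) ∘ d = 1_ c).

Definition convolution {x y z} (f : hom c (Ob x y)) (g : hom c (Ob y z)) : hom c (Ob x z) :=
  mm x y z ∘ (f ⊗m g) ∘ d.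

Lemma convolution_assoc {x y z w}
    (f : hom c (Ob x y)) (g : hom c (Ob y z)) (h : hom c (Ob z w)) :
  convolution (convolution f g) h = convolution f (convolution g h).
Proof.
  unfold convolution. rewrite tensm_cmp3_l, tensm_cmp3_r. nf. rewrite massoc. nf.
  rw2 (asc_nat _ _ _ _ _ _ _ f g h). rw3 coassoc. reflexivity.
Qed.
Lemma convolution_unit_r {x y} (f : hom c (Ob x y)) : convolution f (jj y ∘ e) = f.
Proof.
  unfold convolution. rewrite <- (tensm_absorb_rl (jj y) e f). nf. rewrite munitr.
  rewrite tens_lr. nf. rw2 (run_nat _ _ _ f). rw3 counitr. apply cmp_idr.
Qed.
Lemma convolution_unit_l {x y} (f : hom c (Ob x y)) : convolution (jj x ∘ e) f = f.
Proof.
  unfold convolution. rewrite <- (tensm_absorb_ll (jj x) e f). nf. rewrite munitl.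
  rewrite tens_rl. nf. rw2 (lun_nat _ _ _ f). rw3 counitl. apply cmp_idr.
Qed.

Lemma convolution_inverse_unique {x y} (F : hom c (Ob x y)) (G G' : hom c (Ob y x)) :
  convolution G F = jj y ∘ e -> convolution F G' = jj x ∘ e -> G = G'.
Proof.
  intros H1 H2.
  rewrite <- (convolution_unit_r G), <- H2, <- convolution_assoc, H1.
  apply convolution_unit_l.
Qed.
End Convolution.

Section HopfBasics.
Context {V : BrMonCat} {Xo : Type} (H : HopfVCat V Xo).

Lemma Hcoassoc_asci (x y : Xo) :
  (Hdelta H x y ⊗m 1_ _) ∘ Hdelta H x y = asci _ _ _ ∘ (1_ _ ⊗m Hdelta H x y) ∘ Hdelta H x y.
Proof.
  apply (cancel_split_mono (asc _ _ _) (asci _ _ _)); [apply asci_asc|]. nf.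
  rewrite (Hcoassoc _ _ H x y). simp_iso. reflexivity.
Qed.
Lemma Hm_assoc_asci (x y z w : Xo) :
  Hm H x y w ∘ (1_ _ ⊗m Hm H y z w) = Hm H x z w ∘ (Hm H x y z ⊗m 1_ _) ∘ asci _ _ _.
Proof. rewrite (Hm_assoc _ _ H x y z w). simp_iso. reflexivity. Qed.

Lemma counit_antipode (x y : Xo) : Heps H y x ∘ Hs H x y = Heps H x y.
Proof.
  symmetry. rewrite <- (cmp_idl _ _ _ (Heps H x y)), <- (Hj_eps _ _ H x). nf.
  rw2r (Hs_left _ _ H x y). rw2 (Hm_eps _ _ H x y x).
  rw2 (tensm_absorb_rr (Heps H y x) (Hs H x y) (Heps H x y)).
  rewrite (tens_rl (Heps H x y) (Heps H y x ∘ Hs H x y)). nf.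
  rw2 (lun_nat _ _ _ (Heps H y x ∘ Hs H x y)). rw3 (Hcounitl _ _ H x y). apply cmp_idr.
Qed.

Lemma counit_braid_delta (x y : Xo) :
  (1_ _ ⊗m Heps H x y) ∘ braid (HA H x y) (HA H x y) ∘ Hdelta H x y = runi (HA H x y).
Proof.
  rw2r (braid_nat _ _ _ _ _ (Heps H x y) (1_ (HA H x y))).
  rewrite braid_unit_l. nf. rw3 (Hcounitl _ _ H x y). apply cmp_idr.
Qed.
End HopfBasics.

(* The antipode is anti-multiplicative: s ∘ m = m ∘ (s ⊗ s) ∘ σ.  Both sides are
   convolution inverses of m, for the tensor comonoid H_{x,y} ⊗ H_{y,z}. *)
Section AntiMultiplicative.
Context {V : BrMonCat} {Xo : Type} (H : HopfVCat V Xo) (x y z : Xo).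
Local Notation P := (HA H x y).
Local Notation Q := (HA H y z).

Definition tens_delta : hom (P ⊗ Q) ((P ⊗ Q) ⊗ (P ⊗ Q)) :=
  mid4 P P Q Q ∘ (Hdelta H x y ⊗m Hdelta H y z).
Definition tens_eps : hom (P ⊗ Q) unit := lun unit ∘ (Heps H x y ⊗m Heps H y z).

Lemma tens_delta_coassoc :
  asc _ _ _ ∘ (tens_delta ⊗m 1_ _) ∘ tens_delta = (1_ _ ⊗m tens_delta) ∘ tens_delta.
Proof.
  unfold tens_delta. rewrite tl_cmp. nf.
  rw2 (mid4_natL _ _ _ _ _ _ (Hdelta H x y) (Hdelta H y z)).
  rw2r (tensm_cmp _ _ _ _ _ _ _ _ _ _ _). rewrite !Hcoassoc_asci, !tensm_cmp. nf.
  rw3 (mid4_coassoc P Q P Q P Q). simp_iso.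
  rw2 (mid4_nat _ _ _ _ _ _ _ _ (1_ P) (Hdelta H x y) (1_ Q) (Hdelta H y z)).
  rewrite tensm_id, <- tr_cmp. nf. reflexivity.
Qed.
Lemma tens_eps_counitl : lun _ ∘ (tens_eps ⊗m 1_ _) ∘ tens_delta = 1_ _.
Proof.
  unfold tens_eps, tens_delta. rewrite tl_cmp. nf.
  rw2 (mid4_natL _ _ _ _ _ _ (Heps H x y) (Heps H y z)).
  rw3 (mid4_lun P Q). rewrite <- !tensm_cmp.
  rewrite (Hcounitl _ _ H x y), (Hcounitl _ _ H y z). apply tensm_id.
Qed.
Lemma tens_eps_counitr : run _ ∘ (1_ _ ⊗m tens_eps) ∘ tens_delta = 1_ _.
Proof.
  unfold tens_eps, tens_delta. rewrite tr_cmp. nf.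
  rw2 (mid4_natR _ _ _ _ _ _ (Heps H x y) (Heps H y z)).
  rw3 (mid4_run P Q). rewrite <- !tensm_cmp.
  rewrite (Hcounitr _ _ H x y), (Hcounitr _ _ H y z). apply tensm_id.
Qed.

(* The inner cancellation s_{yz} * id = j ∘ ε in the convolution m * (m ∘ (s ⊗ s) ∘ σ). *)
Lemma antipode_inner_cancel :
  Hm H y y x ∘ (Hm H y z y ⊗m 1_ (HA H y x)) ∘ asci Q (HA H z y) (HA H y x)
  ∘ (1_ Q ⊗m ((Hs H y z ⊗m Hs H x y) ∘ braid P Q)) ∘ xchg P Q Q ∘ (1_ P ⊗m Hdelta H y z)
  = Hs H x y ∘ run P ∘ (1_ P ⊗m Heps H y z).
Proof.
  rewrite tr_cmp. nf.
  rw2 (asci_nat _ _ _ _ _ _ (1_ Q) (Hs H y z) (Hs H x y)).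
  rw2 (tensm_absorb_ll (Hm H y z y) (1_ Q ⊗m Hs H y z) (Hs H x y)).
  rw3 (braid_tens_r_xchg P Q Q).
  rw2 (braid_nat _ _ _ _ _ (1_ P) (Hdelta H y z)).
  rw2 (tensm_absorb_lr (Hm H y z y ∘ (1_ Q ⊗m Hs H y z)) (Hdelta H y z) (Hs H x y)).
  rewrite (Hs_left _ _ H y z), <- (tensm_absorb_ll (Hj H y) (Heps H y z) (Hs H x y)). nf.
  rw2 (Hm_unitl _ _ H y x).
  rewrite (tens_rl (Heps H y z) (Hs H x y)). nf.
  rw2 (lun_nat _ _ _ (Hs H x y)).
  rw2r (braid_nat _ _ _ _ _ (1_ P) (Heps H y z)).
  rw2 (lun_braid P). reflexivity.
Qed.

Lemma antipode_antimultiplicative :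
  Hs H x z ∘ Hm H x y z = Hm H z y x ∘ (Hs H y z ⊗m Hs H x y) ∘ braid P Q.
Proof.
  apply (convolution_inverse_unique (HA H) (Hm H) (Hj H)
           (Hm_assoc _ _ H) (Hm_unitl _ _ H) (Hm_unitr _ _ H)
           (P ⊗ Q) tens_delta tens_eps tens_delta_coassoc tens_eps_counitl tens_eps_counitr
           (Hm H x y z)).
  - unfold convolution, tens_delta, tens_eps.
    rewrite <- (tensm_absorb_ll (Hs H x z) (Hm H x y z) (Hm H x y z)). nf.
    rw3r (Hm_delta _ _ H x y z). rw3 (Hs_right _ _ H x z). rw2 (Hm_eps _ _ H x y z).
    reflexivity.
  - unfold convolution, tens_delta, tens_eps.
    rewrite (tensm_cmp3_r (Hm H z y x) (Hs H y z ⊗m Hs H x y) (braid P Q) (Hm H x y z)).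
    rewrite (tens_lr (Hm H x y z) (Hs H y z ⊗m Hs H x y)). nf.
    rw2r (swap_lr (Hm H x y z) (Hm H z y x)).
    rw2 (Hm_assoc _ _ H x y z x).
    rewrite <- (tensm_id _ P Q).
    rw2 (asc_nat _ _ _ _ _ _ _ (1_ P) (1_ Q) (Hm H z y x)).
    rw2 (asc_nat _ _ _ _ _ _ _ (1_ P) (1_ Q) (Hs H y z ⊗m Hs H x y)).
    rw2 (asc_nat _ _ _ _ _ _ _ (1_ P) (1_ Q) (braid P Q)).
    rewrite mid4_xchg. simp_iso.
    rewrite (tens_rl (Hdelta H x y) (Hdelta H y z)), <- (tensm_id _ P P). nf.
    rw2 (asc_nat _ _ _ _ _ _ _ (1_ P) (1_ P) (Hdelta H y z)).
    rw2 (tr_cmp_eq _ _ _ (Hm_assoc_asci H y z y x)).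
    repeat rw2r (tr_cmp _ _). rewrite antipode_inner_cancel, !tr_cmp. nf.
    rw2r (asc_nat _ _ _ _ _ _ _ (1_ P) (1_ P) (Heps H y z)).
    rw2 (kelly_r P P). rewrite tensm_id.
    rw2r (tens_rl (Hdelta H x y) (Heps H y z)).
    rewrite (tens_lr (Hdelta H x y) (Heps H y z)). nf.
    rw2 (run_nat _ _ _ (Hdelta H x y)). rw3 (Hs_left _ _ H x y).
    rw2r (run_nat _ _ _ (Heps H x y)). rw2r (tens_lr (Heps H x y) (Heps H y z)).
    rewrite lun_run_unit. reflexivity.
Qed.
End AntiMultiplicative.

(* Both sides
   are convolution inverses of δ in the "square" V-category with hom-objects
   H_{x,y} ⊗ H_{x,y}, composition (m ⊗ m) ∘ mid4 and units (j ⊗ j) ∘ λ^{-1}. *)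
Section AntiComultiplicative.
Context {V : BrMonCat} {Xo : Type} (H : HopfVCat V Xo).

Definition sq_ob (a b : Xo) : V := HA H a b ⊗ HA H a b.
Definition sq_m (a b c : Xo) : hom (sq_ob a b ⊗ sq_ob b c) (sq_ob a c) :=
  (Hm H a b c ⊗m Hm H a b c) ∘ mid4 _ _ _ _.
Definition sq_j (a : Xo) : hom unit (sq_ob a a) := (Hj H a ⊗m Hj H a) ∘ luni unit.

Lemma sq_m_assoc (x y z w : Xo) :
  sq_m x z w ∘ (sq_m x y z ⊗m 1_ _) = sq_m x y w ∘ (1_ _ ⊗m sq_m y z w) ∘ asc _ _ _.
Proof.
  unfold sq_m, sq_ob.
  rewrite (tl_cmp (Hm H x y z ⊗m Hm H x y z)), (tr_cmp (Hm H y z w ⊗m Hm H y z w)). nf.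
  rw2 (mid4_natL2 _ _ _ _ _ _ (Hm H x y z) (Hm H x y z)).
  rewrite <- (tensm_cmp _ _ _ _ _ _ _ (Hm H x z w) (Hm H x y z ⊗m 1_ _)
                                      (Hm H x z w) (Hm H x y z ⊗m 1_ _)).
  rewrite !(Hm_assoc _ _ H x y z w), !tensm_cmp. nf.
  rw3 (mid4_assoc (HA H x y) (HA H x y) (HA H y z) (HA H y z) (HA H z w) (HA H z w)).
  rw2r (mid4_natR2 _ _ _ _ _ _ (Hm H y z w) (Hm H y z w)). reflexivity.
Qed.
Lemma sq_m_unitl (x y : Xo) : sq_m x x y ∘ (sq_j x ⊗m 1_ _) = lun _.
Proof.
  unfold sq_m, sq_j, sq_ob. rewrite tl_cmp. nf.
  rw2 (mid4_natL2 _ _ _ _ _ _ (Hj H x) (Hj H x)).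
  rewrite <- (tensm_cmp _ _ _ _ _ _ _ (Hm H x x y) (Hj H x ⊗m 1_ _)
                                      (Hm H x x y) (Hj H x ⊗m 1_ _)).
  rewrite (Hm_unitl _ _ H x y). apply lun_tens_mid4.
Qed.
Lemma sq_m_unitr (x y : Xo) : sq_m x y y ∘ (1_ _ ⊗m sq_j y) = run _.
Proof.
  unfold sq_m, sq_j, sq_ob. rewrite tr_cmp. nf.
  rw2 (mid4_natR2 _ _ _ _ _ _ (Hj H y) (Hj H y)).
  rewrite <- (tensm_cmp _ _ _ _ _ _ _ (Hm H x y y) (1_ _ ⊗m Hj H y)
                                      (Hm H x y y) (1_ _ ⊗m Hj H y)).
  rewrite (Hm_unitr _ _ H x y). apply run_tens_mid4.
Qed.

Lemma antipode_anticomultiplicative (x y : Xo) :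
  Hdelta H y x ∘ Hs H x y
  = (Hs H x y ⊗m Hs H x y) ∘ braid (HA H x y) (HA H x y) ∘ Hdelta H x y.
Proof.
  apply (convolution_inverse_unique sq_ob sq_m sq_j sq_m_assoc sq_m_unitl sq_m_unitr
           (HA H x y) (Hdelta H x y) (Heps H x y)
           (Hcoassoc _ _ H x y) (Hcounitl _ _ H x y) (Hcounitr _ _ H x y)
           (x := x) (y := y) (Hdelta H x y)).
  - unfold convolution, sq_m, sq_j, sq_ob.
    rewrite <- (tensm_absorb_lr (Hdelta H y x) (Hs H x y) (Hdelta H x y)). nf.
    rw3r (Hm_delta _ _ H y x y). rw3 (Hs_right _ _ H x y). rw2 (Hj_delta _ _ H y).
    reflexivity.
  - unfold convolution, sq_m, sq_j, sq_ob.
    rewrite (tensm_cmp3_r (Hs H x y ⊗m Hs H x y) (braid (HA H x y) (HA H x y))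
                          (Hdelta H x y) (Hdelta H x y)). nf.
    rewrite (tens_rl (Hdelta H x y) (braid (HA H x y) (HA H x y))). nf.
    rw2 (swap_lr (Hdelta H x y) (Hdelta H x y)).
    rewrite mid4_xchg. nf. rewrite <- (tensm_id _ (HA H x y) (HA H x y)).
    rw2 (asc_nat _ _ _ _ _ _ _ (1_ _) (1_ _) (Hs H x y ⊗m Hs H x y)).
    rw2 (asc_nat _ _ _ _ _ _ _ (1_ _) (1_ _) (braid (HA H x y) (HA H x y))).
    rw2 (asc_nat _ _ _ _ _ _ _ (1_ _) (1_ _) (Hdelta H x y)).
    rw3 (Hcoassoc _ _ H x y).
    rw2 (tr_cmp_eq _ _ _ (xchg_nat _ _ _ _ _ _ (1_ (HA H x y)) (Hs H x y) (Hs H x y))).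
    rewrite tr_cmp. nf.
    rw2 (tr_cmp_eq _ _ _ (xchg_braid (HA H x y) (HA H x y) (HA H x y))). rewrite tr_cmp. nf.
    rw3 (tr_cmp3_eq _ _ _ _ (eq_sym (Hcoassoc_asci H x y))). rewrite tr_cmp. nf.
    rw2 (tr_cmp_eq _ _ _ (braid_nat _ _ _ _ _ (Hdelta H x y) (1_ (HA H x y)))).
    rewrite tr_cmp. nf.
    rw2 (asci_nat _ _ _ _ _ _ (1_ (HA H x y)) (Hs H x y) (1_ (HA H x y) ⊗m Hs H x y)).
    rw2 (asci_nat _ _ _ _ _ _ (1_ (HA H x y)) (1_ (HA H x y)) (Hdelta H x y)).
    rewrite <- (tensm_cmp _ _ _ _ _ _ _ (Hm H x y x) (1_ _ ⊗m Hs H x y)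
                                        (Hm H x y x) (1_ _ ⊗m Hs H x y)).
    rewrite <- tensm_cmp. nf. rewrite tensm_id, cmp_idr, (Hs_left _ _ H x y).
    rewrite <- (tensm_absorb_rr (Hj H x) (Heps H x y) (Hm H x y x ∘ (1_ _ ⊗m Hs H x y))).
    nf. rewrite <- (tensm_id _ (HA H x y) (HA H x y)).
    rw2r (asci_nat _ _ _ _ _ _ (1_ (HA H x y)) (1_ (HA H x y)) (Heps H x y)).
    rw3 (tr_cmp3_eq _ _ _ _ (counit_braid_delta H x y)).
    rw2 (kelly_runi (HA H x y) (HA H x y)).
    rewrite (tens_rl (Hm H x y x ∘ (1_ _ ⊗m Hs H x y)) (Hj H x)). nf.
    rw2r (runi_nat (Hm H x y x ∘ (1_ _ ⊗m Hs H x y))). rw3 (Hs_left _ _ H x y).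
    rw2 (runi_nat (Hj H x)). rw2r (tens_rl (Hj H x) (Hj H x)).
    rewrite luni_runi_unit. reflexivity.
Qed.
End AntiComultiplicative.

(* Moving a pairing e : D ⊗ A -> I across braidings; these are the string-diagram
   identities behind the formulas for p and q of s ∘ t below. *)
Section Pairings.
Context {B : BrMonCat}.

Lemma pairing_double_braid (A1 A2 D : B) (e : hom (D ⊗ A1) unit) :
  run A2 ∘ (1_ A2 ⊗m e) ∘ asc A2 D A1 ∘ braid A1 (A2 ⊗ D) ∘ asc A1 A2 D ∘ braid D (A1 ⊗ A2)
  = lun A2 ∘ ((e ∘ braid A1 D ∘ braid D A1) ⊗m 1_ A2) ∘ asci D A1 A2.
Proof.
  rewrite (braid_tens_r D A1 A2), (braid_tens_r A1 A2 D). nf. simp_iso.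
  rw5r (braid_tens_l A1 D A2).
  rw2r (tr_cmp e (braid A1 D)).
  rw2r (braid_nat _ _ _ _ _ (e ∘ braid A1 D) (1_ A2)).
  rewrite braid_unit_l. simp_iso.
  rw2r (tl_cmp (e ∘ braid A1 D) (braid D A1)). reflexivity.
Qed.

Lemma pairing_braid_exchange (A1 A2 D : B) (e : hom (D ⊗ A2) unit) :
  lun A1 ∘ (e ⊗m 1_ A1) ∘ asci D A2 A1 ∘ (1_ D ⊗m braid A1 A2)
  = run A1 ∘ (1_ A1 ⊗m e) ∘ asc A1 D A2 ∘ (braidi B A1 D ⊗m 1_ A2) ∘ asci D A1 A2.
Proof.
  assert (Hx : 1_ D ⊗m braid A1 A2
               = asc D A2 A1 ∘ braid A1 (D ⊗ A2) ∘ asc A1 D A2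
                 ∘ (braidi B A1 D ⊗m 1_ A2) ∘ asci D A1 A2).
  { rw3 (hexagon1 B A1 D A2). simp_br. reflexivity. }
  rewrite Hx. simp_iso.
  rw2r (braid_nat _ _ _ _ _ (1_ A1) e). rewrite braid_unit_r. simp_iso. reflexivity.
Qed.

Lemma pairing_braidi_tens (A1 A2 D : B) (e : hom (D ⊗ A2) unit) :
  run A1 ∘ (1_ A1 ⊗m e) ∘ (1_ A1 ⊗m braid A2 D) ∘ asc A1 A2 D ∘ braidi B (A1 ⊗ A2) D
  = lun A1 ∘ (e ⊗m 1_ A1) ∘ asci D A2 A1 ∘ (1_ D ⊗m braid A1 A2).
Proof. rewrite pairing_braid_exchange, braidi_tens_l. simp_br. reflexivity. Qed.
End Pairings.

Section Duals.
Context {V : BrMonClosedCat}.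

Lemma dual_ext (a c : V) (g h : hom c (ihom a unit)) :
  ev a unit ∘ (g ⊗m 1_ a) = ev a unit ∘ (h ⊗m 1_ a) -> g = h.
Proof.
  intros E. transitivity (curry _ (ev a unit ∘ (g ⊗m 1_ a))).
  - apply curry_uniq. reflexivity.
  - rewrite E. symmetry. apply curry_uniq. reflexivity.
Qed.

Definition dual_map {a : V} (f : hom a a) : hom (ihom a unit) (ihom a unit) :=
  curry _ (ev a unit ∘ (1_ _ ⊗m f)).
Lemma dual_map_ev {a : V} (f : hom a a) :
  ev a unit ∘ (dual_map f ⊗m 1_ a) = ev a unit ∘ (1_ _ ⊗m f).
Proof. apply curry_ev. Qed.

Lemma dual_map_split_epi {a : V} (f : hom a a) : is_iso f -> split_epi (dual_map f).
Proof.
  intros [g [Hgf _]]. exists (dual_map g). apply dual_ext.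
  rewrite tl_cmp. nf. rewrite dual_map_ev.
  rw2r (swap_lr (dual_map g) f). rewrite dual_map_ev.
  rw2r (tr_cmp g f). now rewrite Hgf, !tensm_id.
Qed.

Definition dual_twist (a : V) : hom (ihom a unit) (ihom a unit) :=
  curry _ (ev a unit ∘ braid a (ihom a unit) ∘ braid (ihom a unit) a).
Lemma dual_twist_ev (a : V) :
  ev a unit ∘ (dual_twist a ⊗m 1_ a) = ev a unit ∘ braid a (ihom a unit) ∘ braid (ihom a unit) a.
Proof. apply curry_ev. Qed.

Lemma dual_twist_split_epi (a : V) : split_epi (dual_twist a).
Proof.
  exists (curry _ (ev a unit ∘ braidi V (ihom a unit) a ∘ braidi V a (ihom a unit))).
  apply dual_ext. rewrite tl_cmp. nf. rewrite dual_twist_ev. nf.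
  rw2 (braid_nat _ _ _ _ _ (curry _ (ev a unit ∘ braidi V (ihom a unit) a ∘ braidi V a (ihom a unit)))
                         (1_ a)).
  rw2 (braid_nat _ _ _ _ _ (1_ a)
                         (curry _ (ev a unit ∘ braidi V (ihom a unit) a ∘ braidi V a (ihom a unit)))).
  rewrite curry_ev. simp_br. reflexivity.
Qed.
End Duals.

Section IntegralsAndAntipode.
Context {V : BrMonClosedCat} {Xo : Type} (H : HopfVCat V Xo).

(* Right integrals: m ∘ (s t ⊗ s u) = s ∘ m ∘ σ^{-1} ∘ (s u ⊗ t) by
   anti-multiplicativity (u = s^{-1}), and the left-integral equation for t
   turns this into s t ∘ ε ∘ u = s t ∘ ε. *)
Lemma s_comp_t_right_integral (t : integral_family H) :
  antipode_invertible H -> left_integral H t -> right_integral H (s_comp_t H t).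
Proof.
  intros Hinv Ht x y z. unfold s_comp_t.
  destruct (Hinv z y) as [u [Hu1 Hu2]].
  rewrite <- Hu2, tensm_cmp. nf.
  assert (AM : Hm H x y z ∘ (Hs H y x ⊗m Hs H z y)
               = Hs H z x ∘ Hm H z y x ∘ braidi _ (HA H z y) (HA H y x)).
  { rewrite (antipode_antimultiplicative H z y x). simp_br. reflexivity. }
  rw2 AM. rw2 (braidi_nat _ _ _ _ (t y x) u). rewrite braidi_unit_r. simp_iso.
  rewrite (tens_rl u (t y x)). nf. rw2r (runi_nat u).
  rw3 (Ht y x z). rewrite <- (counit_antipode H z y). nf. rw2 Hu2.
  rewrite cmp_idr. reflexivity.
Qed.

Lemma qmap_s_comp_t (t : integral_family H) (x : Xo) :
  qmap H (s_comp_t H t) x x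
  = Hs H x x ∘ pmap H t x x ∘ dual_twist (HA H x x) ∘ dual_map (Hs H x x).
Proof.
  unfold qmap, pmap, s_comp_t, dual.
  rewrite (tl_cmp (Hs H x x) (t x x)). nf.
  rw2 (tl_cmp_eq _ _ _ (antipode_anticomultiplicative H x x)). rewrite !tl_cmp. nf.
  rw2 (asc_nat _ _ _ _ _ _ _ (Hs H x x) (Hs H x x) (1_ (ihom (HA H x x) unit))).
  rw2 (tensm_absorb_rl (braid (HA H x x) (ihom (HA H x x) unit))
                       (Hs H x x ⊗m 1_ _) (Hs H x x)).
  rewrite braid_nat.
  rw2 (tensm_absorb_rl (ev (HA H x x) unit)
         ((1_ _ ⊗m Hs H x x) ∘ braid (HA H x x) (ihom (HA H x x) unit)) (Hs H x x)).
  nf. rewrite <- dual_map_ev.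
  rw2r (braid_nat _ _ _ _ _ (1_ (HA H x x)) (dual_map (Hs H x x))).
  rewrite (tens_lr (Hs H x x)). nf. rw2 (run_nat _ _ _ (Hs H x x)).
  rewrite !tr_cmp. nf.
  rw2r (asc_nat _ _ _ _ _ _ _ (1_ (HA H x x)) (1_ (HA H x x)) (dual_map (Hs H x x))).
  rewrite tensm_id.
  rw2r (swap_lr (braid (HA H x x) (HA H x x)) (dual_map (Hs H x x))).
  rw2r (swap_lr (Hdelta H x x) (dual_map (Hs H x x))).
  rw2r (swap_lr (t x x) (dual_map (Hs H x x))).
  rw2r (luni_nat (dual_map (Hs H x x))).
  rw3r (hexagon1 _ (HA H x x) (HA H x x) (ihom (HA H x x) unit)).
  rw2r (tl_cmp (Hdelta H x x) (t x x)).
  rw2 (point_braid_slide _ _ (Hdelta H x x ∘ t x x)).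
  rw6 (pairing_double_braid (HA H x x) (HA H x x) (ihom (HA H x x) unit) (ev (HA H x x) unit)).
  rewrite <- dual_twist_ev, tl_cmp. nf.
  rw2r (asci_nat _ _ _ _ _ _ (dual_twist (HA H x x)) (1_ (HA H x x)) (1_ (HA H x x))).
  rewrite tensm_id.
  rw2 (swap_lr (dual_twist (HA H x x)) (Hdelta H x x ∘ t x x)).
  rw2r (runi_nat (dual_twist (HA H x x))). rewrite tr_cmp. nf. reflexivity.
Qed.

Lemma pmap_s_comp_t (t : integral_family H) (x : Xo) :
  pmap H (s_comp_t H t) x x = Hs H x x ∘ qmap H t x x ∘ dual_map (Hs H x x).
Proof.
  unfold qmap, pmap, s_comp_t, dual.
  rewrite (tr_cmp (Hs H x x) (t x x)). nf.
  rw2 (tr_cmp_eq _ _ _ (antipode_anticomultiplicative H x x)). rewrite !tr_cmp. nf.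
  rw2 (asci_nat _ _ _ _ _ _ (1_ (ihom (HA H x x) unit)) (Hs H x x) (Hs H x x)).
  rw2 (tensm_absorb_ll (ev (HA H x x) unit) (1_ _ ⊗m Hs H x x) (Hs H x x)).
  rewrite <- dual_map_ev.
  rewrite (tens_rl (ev (HA H x x) unit ∘ (dual_map (Hs H x x) ⊗m 1_ _)) (Hs H x x)). nf.
  rw2 (lun_nat _ _ _ (Hs H x x)).
  rewrite tl_cmp. nf.
  rw2r (asci_nat _ _ _ _ _ _ (dual_map (Hs H x x)) (1_ (HA H x x)) (1_ (HA H x x))).
  rewrite tensm_id.
  rw2 (swap_lr (dual_map (Hs H x x)) (braid (HA H x x) (HA H x x))).
  rw2 (swap_lr (dual_map (Hs H x x)) (Hdelta H x x)).
  rw2 (swap_lr (dual_map (Hs H x x)) (t x x)).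
  rw2r (runi_nat (dual_map (Hs H x x))).
  rw2r (tl_cmp (Hdelta H x x) (t x x)).
  rw2 (point_braidi_slide _ _ (Hdelta H x x ∘ t x x)).
  rw5 (pairing_braidi_tens (HA H x x) (HA H x x) (ihom (HA H x x) unit) (ev (HA H x x) unit)).
  rewrite tr_cmp. nf. reflexivity.
Qed.
End IntegralsAndAntipode.

Theorem mainTheorem2 (V : BrMonClosedCat) (X : Type) (H : HopfVCat V X)
    (Hsinv : antipode_invertible H) (t : integral_family H) :
  left_integral H t ->
  right_integral H (s_comp_t H t)
  /\ (left_nonsingular H t -> right_nonsingular H (s_comp_t H t))
  /\ (right_nonsingular H t -> left_nonsingular H (s_comp_t H t)).
Proof.
  intros Hleft. split; [|split].
  - exact (s_comp_t_right_integral H t Hsinv Hleft).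
  - intros Hp x. rewrite qmap_s_comp_t.
    apply split_epi_cmp; [apply split_epi_cmp; [apply split_epi_cmp|]|].
    + apply iso_split_epi, Hsinv.
    + apply Hp.
    + apply dual_twist_split_epi.
    + apply dual_map_split_epi, Hsinv.
  - intros Hq x. rewrite pmap_s_comp_t.
    apply split_epi_cmp; [apply split_epi_cmp|].
    + apply iso_split_epi, Hsinv.
    + apply Hq.
    + apply dual_map_split_epi, Hsinv.
Qed.
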